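(* Let $X_1,\dots,X_n$ be i.i.d. $\mathsf{Bernoulli}(p)$ with $p\in[\frac12,1)$, $Y_k=X_k\oplus V_k$ with $V_1,\dots,V_n$ i.i.d. $\mathsf{Bernoulli}(\alpha)$ independent of $X^n$, $\alpha\in[0,\frac12)$, $\bar\alpha>p$. Let $q=\alpha\bar p+\bar\alpha p$, $\zeta_n(\varepsilon)=\frac{\bar\alpha^n-\varepsilon^n}{(\bar\alpha p)^n-(\alpha\bar p)^n}$, and for each $n$ let $\varepsilon_{\mathsf L}=\varepsilon_{\mathsf L}^{(n)}\in[p,\bar\alpha)$ be such that $\underline{\mathcal{h}}_n^n(\varepsilon)=1-\zeta_n(\varepsilon)q^n$ for all $\varepsilon\in[\varepsilon_{\mathsf L},\bar\alpha]$ (such a number exists). Let $$\Phi(n)=\frac{q^n\bar\alpha^{n-1}}{(\bar\alpha p)^n-(\alpha\bar p)^n}.$$ If $p>\frac12$ and $\alpha>0$, then for all sufficiently large $n$ and all $\varepsilon\in[\varepsilon_{\mathsf L},\bar\alpha]$, $$\underline{\mathcal{h}}_n(\varepsilon)-\mathcal{h}^{\mathsf i}_n(\varepsilon)\ge(\bar\alpha-\varepsilon)[\Phi(1)-\Phi(n)].$$ If $p=\frac12$, then for every $n\ge1$ and every $\varepsilon\in[\varepsilon_{\mathsf L},\bar\alpha]$, $$\mathcal{h}^{\mathsf i}_n(\varepsilon)\le\underline{\mathcal{h}}_n(\varepsilon)\le\mathcal{h}^{\mathsf i}_n(\varepsilon)+\frac{\alpha}{2\bar\alpha}.$$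
   Context: $\bar a=1-a$; $\oplus$ is addition mod 2. $\mathsf{P}_{\mathsf{c}}(X^n|Z^n)=\sum_{z^n}\max_{x^n}P_{X^nZ^n}(x^n,z^n)$. $\underline{\mathcal{h}}_n(\varepsilon)=\sup\{\mathsf{P}_{\mathsf{c}}^{1/n}(Y^n|Z^n): P_{Z^n|Y^n},\ \mathcal{Z}^n=\{0,1\}^n,\ X^n - Y^n - Z^n,\ \mathsf{P}_{\mathsf{c}}^{1/n}(X^n|Z^n)\le\varepsilon\}$ for $\varepsilon\in[p,\bar\alpha]$. $\mathcal{h}^{\mathsf i}_n(\varepsilon)$ is the same supremum restricted to memoryless filters $P_{Z^n|Y^n}(z^n|y^n)=\prod_{k=1}^n\mathsf{W}(z_k|y_k)$ with a single binary channel $\mathsf{W}$. *)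

From HB Require Import structures.
From mathcomp Require Import all_boot all_order all_algebra.
From mathcomp Require Import all_classical all_reals all_analysis.
Set Implicit Arguments. Unset Strict Implicit. Unset Printing Implicit Defensive.
Import Order.TTheory GRing.Theory Num.Theory.
Local Open Scope classical_set_scope.
Local Open Scope ring_scope.

Section Defs.
Variable R : realType.

Definition bstr (n : nat) := {ffun 'I_n -> bool}.

Definition bern (a : R) (b : bool) : R := if b then a else 1 - a.

Definition PX (p : R) n (x : bstr n) : R := \prod_(k < n) bern p (x k).

(* channel Y_k = X_k xor V_k, V_k i.i.d. Bernoulli(alpha), independent of X^n *)
Definition PYgX (al : R) n (y x : bstr n) : R :=
  \prod_(k < n) bern al (x k (+) y k).

(* a filter P_{Z^n|Y^n}, Z^n in {0,1}^n : W y z = P(Z^n = z | Y^n = y) *)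
Definition is_filter n (W : bstr n -> bstr n -> R) : Prop :=
  (forall y z, 0 <= W y z) /\ (forall y, \sum_(z : bstr n) W y z = 1).

(* joint laws, for the Markov chain X^n - Y^n - Z^n *)
Definition PXZ (p al : R) n (W : bstr n -> bstr n -> R) (x z : bstr n) : R :=
  \sum_(y : bstr n) PX p x * PYgX al y x * W y z.
Definition PYZ (p al : R) n (W : bstr n -> bstr n -> R) (y z : bstr n) : R :=
  \sum_(x : bstr n) PX p x * PYgX al y x * W y z.

Definition Pc n (J : bstr n -> bstr n -> R) : R :=
  \sum_(z : bstr n) \big[Num.max/0]_(a : bstr n) J a z.

Definition PcX (p al : R) n (W : bstr n -> bstr n -> R) := Pc (PXZ p al W).
Definition PcY (p al : R) n (W : bstr n -> bstr n -> R) := Pc (PYZ p al W).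

(* memoryless filter built from a single binary channel w y z = w(z|y) *)
Definition is_bin_channel (w : bool -> bool -> R) : Prop :=
  (forall y z, 0 <= w y z) /\ (forall y, w y false + w y true = 1).
Definition memoryless n (w : bool -> bool -> R) : bstr n -> bstr n -> R :=
  fun y z => \prod_(k < n) w (y k) (z k).

Definition h_low (p al : R) (n : nat) (eps : R) : R :=
  sup [set r | exists W : bstr n -> bstr n -> R, is_filter W /\
        powR (PcX p al W) (n%:R^-1) <= eps /\
        r = powR (PcY p al W) (n%:R^-1)].

Definition h_iid (p al : R) (n : nat) (eps : R) : R :=
  sup [set r | exists w : bool -> bool -> R, is_bin_channel w /\
        powR (PcX p al (@memoryless n w)) (n%:R^-1) <= eps /\
        r = powR (PcY p al (@memoryless n w)) (n%:R^-1)].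

Definition qq (p al : R) : R := al * (1 - p) + (1 - al) * p.

Definition zeta (p al : R) (n : nat) (eps : R) : R :=
  ((1 - al) ^+ n - eps ^+ n) / (((1 - al) * p) ^+ n - (al * (1 - p)) ^+ n).

Definition Phi (p al : R) (n : nat) : R :=
  (qq p al) ^+ n * (1 - al) ^+ n.-1 /
  (((1 - al) * p) ^+ n - (al * (1 - p)) ^+ n).

Definition is_epsL (p al : R) (n : nat) (eL : R) : Prop :=
  p <= eL < 1 - al /\
  forall eps, eL <= eps <= 1 - al ->
    (h_low p al n eps) ^+ n = 1 - zeta p al n eps * (qq p al) ^+ n.

End Defs.

From HB Require Import structures.
From mathcomp Require Import all_boot all_order all_algebra.
From mathcomp Require Import all_classical all_reals all_analysis.
From mathcomp Require Import ring lra.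
Set Implicit Arguments. Unset Strict Implicit. Unset Printing Implicit Defensive.
Import Order.TTheory GRing.Theory Num.Theory.
Local Open Scope classical_set_scope.
Local Open Scope ring_scope.

(* For a memoryless filter built from a binary channel w, both joint laws P_XZ and P_YZ
   factor letter by letter, so P_c(X^n|Z^n) and P_c(Y^n|Z^n) are the n-th powers of their
   single-letter values and h^i_n(eps) is a single-letter supremum, the same for every n.
   A four-case check over the MAP estimators of Y shows that every binary channel with
   P_c(X|Z) <= eps has P_c(Y|Z) <= 1 - (1 - al - eps) Phi(1), which bounds h^i_n above.
   On the other side, with c = (1 - al) Phi(n) and v = eps / (1 - al) the closed form of
   h_n reads h_n^n = 1 - c (1 - v^n).  When p > 1/2 and al > 0 we have q < p, hence c <= 1
   for large n, and convexity of t |-> t^n yields h_n >= 1 - c (1 - v), which is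
   1 - (1 - al - eps) Phi(n).  For p = 1/2 the closed form gives h_n <= eps / (1 - al),
   whereas a Z-channel with P_c(X|Z) = eps gives h^i_n >= (eps - al) / (1 - 2 al), and these
   two bounds differ by at most al / (2 (1 - al)). *)

Section Bounds.
Variable R : realType.
Implicit Types (p al eps : R) (w : bool -> bool -> R).

Lemma powR_exprn_inv (c : R) n : (0 < n)%N -> 0 <= c -> powR (c ^+ n) n%:R^-1 = c.
Proof.
move=> n0 c0; rewrite -powR_mulrn // -powRrM mulfV ?powRr1 //.
by rewrite pnatr_eq0 -lt0n.
Qed.

Lemma exprn_powR_inv (x : R) n : (0 < n)%N -> 0 <= x -> powR x n%:R^-1 ^+ n = x.
Proof.
move=> n0 x0; rewrite -powR_mulrn ?powR_ge0 // -powRrM mulVf ?powRr1 //.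
by rewrite pnatr_eq0 -lt0n.
Qed.

Lemma exprn_convex_le (c v : R) n : 0 <= c <= 1 -> 0 <= v <= 1 ->
  (1 - c * (1 - v)) ^+ n <= 1 - c * (1 - v ^+ n).
Proof.
move=> /andP[c0 c1] /andP[v0 v1]; elim: n => [|n IH]; first by rewrite !expr0; lra.
have /andP[vn0 vn1] : 0 <= v ^+ n <= 1 by rewrite exprn_ge0 // exprn_ile1.
have b0 : 0 <= 1 - c * (1 - v) by nra.
rewrite exprS (le_trans (ler_wpM2l b0 IH)) // exprS.
have : 0 <= c * (1 - c) * (1 - v) * (1 - v ^+ n) by rewrite !mulr_ge0 // subr_ge0.
nra.
Qed.

Lemma convex_le_root (h c v : R) n : (0 < n)%N -> 0 <= h -> 0 <= c <= 1 -> 0 <= v <= 1 ->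
  h ^+ n = 1 - c * (1 - v ^+ n) -> 1 - c * (1 - v) <= h.
Proof.
move=> n0 h0 c01 v01 hn; have := exprn_convex_le n c01 v01.
case/andP: c01 => c0 c1; case/andP: v01 => v0 v1.
by rewrite -hn ler_pXn2r // nnegrE; nra.
Qed.

Lemma bigmax_bool (F : bool -> R) : (forall b, 0 <= F b) ->
  \big[Num.max/0]_(b : bool) F b = Num.max (F true) (F false).
Proof. by move=> F0; rewrite /index_enum !unlock /= (max_l (F0 false)). Qed.

Lemma bigmax_prod_ffun n (G : 'I_n -> bool -> R) : (forall k b, 0 <= G k b) ->
  \big[Num.max/0]_(a : {ffun 'I_n -> bool}) \prod_(k < n) G k (a k)
  = \prod_(k < n) \big[Num.max/0]_(b : bool) G k b.
Proof.
move=> G0; apply/le_anti/andP; split.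
  apply: bigmax_le => [|a _]; first by apply: prodr_ge0 => k _; exact: bigmax_ge_id.
  by apply: ler_prod => k _; rewrite G0 le_bigmax.
pose a0 := [ffun k => G k false <= G k true].
have -> : \prod_(k < n) \big[Num.max/0]_(b : bool) G k b = \prod_(k < n) G k (a0 k).
  by apply: eq_bigr => k _; rewrite bigmax_bool // ffunE maxEge; case: ifP.
exact: (le_bigmax _ (fun a : {ffun 'I_n -> bool} => \prod_(k < n) G k (a k))).
Qed.

Definition Pc1 (F : bool -> bool -> R) : R :=
  \sum_(z : bool) \big[Num.max/0]_(a : bool) F a z.

Lemma Pc1E F : (forall a z, 0 <= F a z) ->
  Pc1 F = Num.max (F true true) (F false true) + Num.max (F true false) (F false false).
Proof. by move=> F0; rewrite /Pc1 big_bool !bigmax_bool. Qed.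

Lemma Pc1_attained F : (forall a z, 0 <= F a z) ->
  exists a1 a0, Pc1 F = F a1 true + F a0 false.
Proof.
by move=> F0; rewrite Pc1E // !maxEle; case: ifP => _; case: ifP => _; do 2!eexists.
Qed.

Lemma Pc1_ge F a1 a0 : (forall a z, 0 <= F a z) -> F a1 true + F a0 false <= Pc1 F.
Proof.
by move=> F0; rewrite Pc1E // lerD // le_max; [case: a1 | case: a0]; rewrite lexx ?orbT.
Qed.

Lemma Pc1_ge0 F : 0 <= Pc1 F.
Proof. by apply: sumr_ge0 => z _; exact: bigmax_ge_id. Qed.

Lemma Pc_ge0 n (J : bstr n -> bstr n -> R) : 0 <= Pc J.
Proof. by apply: sumr_ge0 => z _; exact: bigmax_ge_id. Qed.

Lemma Pc_prod n (J : bstr n -> bstr n -> R) (F : bool -> bool -> R) :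
  (forall a z, 0 <= F a z) -> (forall a z, J a z = \prod_(k < n) F (a k) (z k)) ->
  Pc J = Pc1 F ^+ n.
Proof.
move=> F0 JE; pose M z := \big[Num.max/0]_(a : bool) F a z.
rewrite /Pc (eq_bigr (fun z : bstr n => \prod_(k < n) M (z k))) => [|z _].
  by rewrite -(bigA_distr_bigA (fun k => M)) prodr_const card_ord.
rewrite (eq_bigr (fun a : bstr n => \prod_(k < n) F (a k) (z k))) => [|a _]; last exact: JE.
by rewrite (@bigmax_prod_ffun _ (fun k a => F a (z k))).
Qed.

Lemma Pc_le_sum n (J : bstr n -> bstr n -> R) : (forall a z, 0 <= J a z) ->
  Pc J <= \sum_(a : bstr n) \sum_(z : bstr n) J a z.
Proof.
move=> J0; rewrite exchange_big; apply: ler_sum => z _.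
apply: bigmax_le => [|a _]; first exact: sumr_ge0.
by rewrite (bigD1 a) //= lerDl sumr_ge0.
Qed.

Lemma bern_ge0 (a : R) b : 0 <= a <= 1 -> 0 <= bern a b.
Proof. by case/andP=> a0 a1; case: b => /=; lra. Qed.

Section Memoryless.
Variables p al : R.
Hypotheses (p01 : 0 <= p <= 1) (al01 : 0 <= al <= 1).

Definition pxz1 w (x z : bool) : R := \sum_(y : bool) bern p x * bern al (x (+) y) * w y z.
Definition pyz1 w (y z : bool) : R := \sum_(x : bool) bern p x * bern al (x (+) y) * w y z.
Definition PcX1 w := Pc1 (pxz1 w).
Definition PcY1 w := Pc1 (pyz1 w).

Lemma pxz1_ge0 w : is_bin_channel w -> forall x z, 0 <= pxz1 w x z.
Proof. by case=> w0 _ x z; apply: sumr_ge0 => y _; rewrite !mulr_ge0 ?bern_ge0. Qed.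

Lemma pyz1_ge0 w : is_bin_channel w -> forall y z, 0 <= pyz1 w y z.
Proof. by case=> w0 _ y z; apply: sumr_ge0 => x _; rewrite !mulr_ge0 ?bern_ge0. Qed.

Lemma PXZ_memoryless n w (x z : bstr n) :
  PXZ p al (@memoryless R n w) x z = \prod_(k < n) pxz1 w (x k) (z k).
Proof.
rewrite /pxz1 bigA_distr_bigA; apply: eq_bigr => y _.
by rewrite /PX /PYgX /memoryless -!big_split.
Qed.

Lemma PYZ_memoryless n w (y z : bstr n) :
  PYZ p al (@memoryless R n w) y z = \prod_(k < n) pyz1 w (y k) (z k).
Proof.
rewrite /pyz1 bigA_distr_bigA; apply: eq_bigr => x _.
by rewrite /PX /PYgX /memoryless -!big_split.
Qed.

Lemma PcX_memoryless n w : is_bin_channel w ->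
  PcX p al (@memoryless R n w) = PcX1 w ^+ n.
Proof. by move=> hw; apply: Pc_prod; [exact: pxz1_ge0 | exact: PXZ_memoryless]. Qed.

Lemma PcY_memoryless n w : is_bin_channel w ->
  PcY p al (@memoryless R n w) = PcY1 w ^+ n.
Proof. by move=> hw; apply: Pc_prod; [exact: pyz1_ge0 | exact: PYZ_memoryless]. Qed.

Lemma memoryless_filter n w : is_bin_channel w -> is_filter (@memoryless R n w).
Proof.
case=> w0 w1; split=> [y z|y]; first exact: prodr_ge0.
rewrite /memoryless -(bigA_distr_bigA (fun k z => w (y k) z)).
by apply: big1 => k _; rewrite big_bool /= addrC w1.
Qed.

Lemma sum_PX n : \sum_(x : bstr n) PX p x = 1.
Proof.
rewrite /PX -(bigA_distr_bigA (fun k b => bern p b)).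
by apply: big1 => k _; rewrite big_bool /= subrKC.
Qed.

Lemma sum_PYgX n (x : bstr n) : \sum_(y : bstr n) PYgX al y x = 1.
Proof.
rewrite /PYgX -(bigA_distr_bigA (fun k b => bern al (x k (+) b))).
by apply: big1 => k _; rewrite big_bool /=; case: (x k); rewrite /= ?subrK ?subrKC.
Qed.

Lemma sum_PYZ n (W : bstr n -> bstr n -> R) : is_filter W ->
  \sum_(y : bstr n) \sum_(z : bstr n) PYZ p al W y z = 1.
Proof.
case=> _ W1.
have sum_z y : \sum_(z : bstr n) PYZ p al W y z = \sum_(x : bstr n) PX p x * PYgX al y x.
  rewrite /PYZ exchange_big /=; apply: eq_bigr => x _.
  by rewrite -mulr_sumr W1 mulr1.
rewrite (eq_bigr _ (fun y _ => sum_z y)) exchange_big /= -(sum_PX n).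
by apply: eq_bigr => x _; rewrite -mulr_sumr sum_PYgX mulr1.
Qed.

Lemma PcY_le1 n (W : bstr n -> bstr n -> R) : is_filter W -> PcY p al W <= 1.
Proof.
move=> hW; rewrite -(sum_PYZ hW); apply: Pc_le_sum => y z.
case: hW => W0 _; apply: sumr_ge0 => x _.
by rewrite !mulr_ge0 ?W0 //; apply: prodr_ge0 => k _; exact: bern_ge0.
Qed.

Lemma PcY1_le1 w : is_bin_channel w -> PcY1 w <= 1.
Proof.
by move=> hw; rewrite -[PcY1 w]expr1 -(PcY_memoryless 1 hw) (PcY_le1 (memoryless_filter 1 hw)).
Qed.

Definition iid_set eps : set R :=
  [set PcY1 w | w in [set w | is_bin_channel w /\ PcX1 w <= eps]].

Lemma h_iidE n eps : (0 < n)%N -> h_iid p al n eps = sup (iid_set eps).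
Proof.
move=> n0; congr sup; apply/seteqP; split=> r.
- case=> w [hw [hX ->]]; rewrite PcX_memoryless // powR_exprn_inv ?Pc1_ge0 // in hX.
  by exists w => //; rewrite PcY_memoryless // powR_exprn_inv ?Pc1_ge0.
- case=> w [hw hX] <-; exists w; split => //.
  by rewrite PcX_memoryless ?PcY_memoryless // !powR_exprn_inv ?Pc1_ge0.
Qed.

Lemma iid_set_ub eps : ubound (iid_set eps) 1.
Proof. by move=> _ [w [hw _] <-]; exact: PcY1_le1. Qed.

Lemma PcY1_le_h_low n eps w : (0 < n)%N -> is_bin_channel w -> PcX1 w <= eps ->
  PcY1 w <= h_low p al n eps.
Proof.
move=> n0 hw hX; apply: ub_le_sup.
  exists 1 => _ [W [hW [_ ->]]].
  rewrite -(ler_pXn2r n0) ?nnegrE ?powR_ge0 // exprn_powR_inv ?Pc_ge0 // expr1n.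
  exact: PcY_le1 hW.
exists (@memoryless R n w); split; first exact: memoryless_filter.
by rewrite PcX_memoryless ?PcY_memoryless // !powR_exprn_inv ?Pc1_ge0.
Qed.

Definition const_channel (y z : bool) : R := if z then 0 else 1.

Lemma const_channel_bin : is_bin_channel const_channel.
Proof. by split=> [y [] | y] /=; rewrite ?lexx ?ler01 ?addr0. Qed.

Lemma PcX1_const_channel : 2^-1 <= p -> PcX1 const_channel <= p.
Proof.
move=> hp; rewrite /PcX1 Pc1E; last exact: pxz1_ge0 const_channel_bin.
rewrite /pxz1 !big_bool /const_channel /bern /= !mulr0 addr0 maxxx add0r !mulr1 ge_max.
by apply/andP; split; lra.
Qed.

Lemma iid_set_neq0 eps : 2^-1 <= p -> p <= eps -> iid_set eps !=set0.
Proof.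
move=> hp hpe; exists (PcY1 const_channel), const_channel => //.
by split; [exact: const_channel_bin | exact: le_trans (PcX1_const_channel hp) hpe].
Qed.

Lemma h_iid_le_h_low n eps : (0 < n)%N -> 2^-1 <= p -> p <= eps ->
  h_iid p al n eps <= h_low p al n eps.
Proof.
move=> n0 hp hpe; rewrite h_iidE //; apply: ge_sup; first exact: iid_set_neq0.
by move=> _ [w [hw hX] <-]; exact: PcY1_le_h_low.
Qed.

Lemma h_low_ge0 n eps : (0 < n)%N -> 2^-1 <= p -> p <= eps -> 0 <= h_low p al n eps.
Proof.
move=> n0 hp hpe; apply: le_trans (Pc1_ge0 _) (PcY1_le_h_low n0 const_channel_bin _).
exact: le_trans (PcX1_const_channel hp) hpe.
Qed.

End Memoryless.

Definition zchannel (t : R) (y z : bool) : R :=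
  if y then (if z then 1 else 0) else (if z then t else 1 - t).

Lemma zchannel_bin (t : R) : 0 <= t <= 1 -> is_bin_channel (zchannel t).
Proof. by case/andP=> t0 t1; split=> [[] []|[]] /=; lra. Qed.

Lemma zchannel_gap (al eps : R) : 0 <= al < 2^-1 -> 2^-1 <= eps ->
  eps / (1 - al) <= (eps - al) / (1 - 2 * al) + al / (2 * (1 - al)).
Proof.
move=> /andP[al0 al_lt] e_ge; rewrite -subr_ge0.
have -> : (eps - al) / (1 - 2 * al) + al / (2 * (1 - al)) - eps / (1 - al)
          = al * (2 * eps - 1) / (2 * (1 - al) * (1 - 2 * al)).
  by field; rewrite !gt_eqF //; lra.
by rewrite divr_ge0 ?mulr_ge0 //; lra.
Qed.

Definition dPhi p al n := ((1 - al) * p) ^+ n - (al * (1 - p)) ^+ n.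

Section Regime.
Variables p al : R.
Hypotheses (p_bounds : 2^-1 <= p < 1) (al_bounds : 0 <= al < 2^-1).

Let p01 : 0 <= p <= 1.
Proof. by case/andP: p_bounds => ? ?; apply/andP; split; lra. Qed.

Let al01 : 0 <= al <= 1.
Proof. by case/andP: al_bounds => ? ?; apply/andP; split; lra. Qed.

Let p_ge_half : 2^-1 <= p.
Proof. by case/andP: p_bounds. Qed.

Let al'_gt0 : 0 < 1 - al.
Proof. by case/andP: al_bounds => ? ?; lra. Qed.

Lemma qq_gt0 : 0 < qq p al.
Proof. by case/andP: p_bounds => ? ?; case/andP: al_bounds => ? ?; rewrite /qq; nra. Qed.

Lemma dPhi_gt0 n : (0 < n)%N -> 0 < dPhi p al n.
Proof.
move=> n0; case/andP: p_bounds => ? ?; case/andP: al_bounds => ? ?.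
by rewrite subr_gt0 ltrXn2r -?lt0n //; nra.
Qed.

Lemma PhiE n : (0 < n)%N -> (1 - al) * Phi p al n = ((1 - al) * qq p al) ^+ n / dPhi p al n.
Proof.
case: n => // n _; rewrite /Phi /= mulrA; congr (_ / _).
by rewrite exprMn [(1 - al) ^+ n.+1]exprS; ring.
Qed.

Lemma Phi_ge0 n : (0 < n)%N -> 0 <= Phi p al n.
Proof.
move=> n0; apply: divr_ge0; last exact: ltW (dPhi_gt0 n0).
by rewrite mulr_ge0 ?exprn_ge0 ?(ltW qq_gt0) ?(ltW al'_gt0).
Qed.

Lemma Phi1E : Phi p al 1 = qq p al / dPhi p al 1.
Proof. by rewrite /Phi /= expr0 mulr1 expr1. Qed.

Lemma PcY1_le_Phi1 w : is_bin_channel w ->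
  PcY1 p al w <= 1 - (1 - al - PcX1 p al w) * Phi p al 1.
Proof.
move=> hw; set D := dPhi p al 1; set q := qq p al.
have D0 : 0 < D := dPhi_gt0 (ltn0Sn 0).
suff key : PcY1 p al w * D <= D - (1 - al - PcX1 p al w) * q.
  by rewrite Phi1E -/D -/q mulrA -(ler_pM2r D0) mulrBl mul1r divfK ?gt_eqF.
rewrite /PcY1 /PcX1; have [y1 [y0 ->]] := Pc1_attained (pyz1_ge0 p01 al01 hw).
(* Guess x = y when the MAP estimate y of Y depends on z, and the likelier value x = true
   of X when it does not. *)
set X := pxz1 p al w (y1 || ~~ y0) true + pxz1 p al w (~~ y1 || y0) false.
apply: le_trans (_ : _ <= D - (1 - al - X) * q) _.
  case: hw => w0 w1; case/andP: p_bounds => ? ?; case/andP: al_bounds => ? ?.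
  have e0 : w false true = 1 - w false false by have := w1 false; lra.
  have e1 : w true true = 1 - w true false by have := w1 true; lra.
  have a0 := w0 false false; have a1 : 0 <= 1 - w false false by rewrite -e0.
  have b0 := w0 true false; have b1 : 0 <= 1 - w true false by rewrite -e1.
  have c0 : 0 <= al * (2 * p - 1) * (1 - al) by rewrite !mulr_ge0 //; lra.
  have ca0 := mulr_ge0 c0 a0; have ca1 := mulr_ge0 c0 a1; have cb1 := mulr_ge0 c0 b1.
  have cq : 0 <= (al * (1 - p) + (1 - al) * p) * (2 * p - 1) by rewrite mulr_ge0 //; nra.
  rewrite {}/X /pxz1 /pyz1 /D /dPhi /q /qq.
  by case: y1; case: y0; rewrite !big_bool /bern /= e0 e1 !expr1; lra.
have hX : X <= Pc1 (pxz1 p al w) := Pc1_ge _ _ (pxz1_ge0 p01 al01 hw).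
by rewrite lerD2l lerN2 ler_wpM2r ?(ltW qq_gt0) // lerD2l lerN2.
Qed.

Lemma h_iid_le_Phi1 n eps : (0 < n)%N -> p <= eps ->
  h_iid p al n eps <= 1 - (1 - al - eps) * Phi p al 1.
Proof.
move=> n0 hpe; rewrite h_iidE //; apply: ge_sup; first exact: iid_set_neq0.
move=> _ [w [hw hX] <-]; apply: le_trans (PcY1_le_Phi1 hw) _.
by rewrite lerD2l lerN2 ler_wpM2r ?Phi_ge0 // lerD2l lerN2.
Qed.

Lemma Phi_eventually_le1 : 2^-1 < p -> 0 < al ->
  \forall n \near \oo, (1 - al) * Phi p al n <= 1.
Proof.
move=> p_gt al_gt; have q0 := qq_gt0; set q := qq p al in q0 *.
case/andP: p_bounds => _ p1; case/andP: al_bounds => _ al_lt.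
have p0 : 0 < p by have := p_ge_half; lra.
have qp : `|q / p| < 1.
  by rewrite ger0_norm ?divr_ge0 ?ltW // ltr_pdivrMr // mul1r /q /qq; nra.
apply: filterS (cvgr_lt 0 (cvg_expr qp) 2^-1 _) => // -[|n] small.
  by rewrite /Phi /= !expr0 subrr invr0 !mulr0 ler01.
(* [al (1 - p) <= (1 - al) q], so [dPhi p al n >= ((1 - al) q)^n] once [2 q^n <= p^n]. *)
rewrite PhiE // ler_pdivrMr ?dPhi_gt0 // mul1r /dPhi.
have q2p : 2 * q ^+ n.+1 <= p ^+ n.+1.
  move: small; rewrite /= expr_div_n ltr_pdivrMr ?exprn_gt0 //; lra.
have noise : (al * (1 - p)) ^+ n.+1 <= ((1 - al) * q) ^+ n.+1.
  by rewrite lerXn2r ?nnegrE /q /qq; nra.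
have s0 : 0 <= (1 - al) ^+ n.+1 by rewrite exprn_ge0 //; lra.
by have := ler_wpM2l s0 q2p; rewrite !exprMn in noise *; lra.
Qed.

Lemma zeta_qqE n eps : (0 < n)%N ->
  zeta p al n eps * qq p al ^+ n = (1 - al) * Phi p al n * (1 - (eps / (1 - al)) ^+ n).
Proof.
move=> n0; have := dPhi_gt0 n0; have := al'_gt0.
rewrite PhiE // /zeta /dPhi expr_div_n !exprMn => al' D0.
by field; rewrite !gt_eqF ?exprn_gt0.
Qed.

Lemma h_low_ge_Phi n eL eps : (0 < n)%N -> is_epsL p al n eL -> eL <= eps <= 1 - al ->
  (1 - al) * Phi p al n <= 1 -> 1 - (1 - al - eps) * Phi p al n <= h_low p al n eps.
Proof.
move=> n0 [/andP[pL _] hE] /andP[Le e2] c1; have pe := le_trans pL Le.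
have al' := al'_gt0.
have v01 : 0 <= eps / (1 - al) <= 1.
  by rewrite divr_ge0 ?ler_pdivrMr ?mul1r ?e2 //; have := p_ge_half; lra.
have c01 : 0 <= (1 - al) * Phi p al n <= 1 by rewrite c1 mulr_ge0 ?Phi_ge0 //; lra.
have -> : (1 - al - eps) * Phi p al n = (1 - al) * Phi p al n * (1 - eps / (1 - al)).
  by field; rewrite gt_eqF.
apply: (convex_le_root n0 (h_low_ge0 p01 al01 n0 p_ge_half pe) c01 v01).
by rewrite -zeta_qqE //; apply: hE; rewrite Le e2.
Qed.

Lemma PcX1_zchannel (t : R) : p = 2^-1 -> 0 <= t <= 1 ->
  PcX1 p al (zchannel t) <= 1 - al - t * (1 - 2 * al) / 2.
Proof.
move=> p_half t01; rewrite /PcX1 (Pc1E (pxz1_ge0 p01 al01 (zchannel_bin t01))).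
case/andP: t01 => t0 t1; case/andP: al_bounds => al0 al_lt.
rewrite (_ : _ - _ = (1 - al + al * t) / 2 + (1 - al) * (1 - t) / 2); last by field.
rewrite /pxz1 !big_bool /zchannel /bern /= p_half.
by apply: lerD; rewrite ge_max; apply/andP; split; nra.
Qed.

Lemma PcY1_zchannel (t : R) : p = 2^-1 -> 0 <= t <= 1 -> 1 - t / 2 <= PcY1 p al (zchannel t).
Proof.
move=> p_half t01; rewrite /PcY1 (Pc1E (pyz1_ge0 p01 al01 (zchannel_bin t01))).
rewrite (_ : _ - _ = 2^-1 + (1 - t) / 2); last by field.
rewrite /pyz1 !big_bool /zchannel /bern /= p_half.
by apply: lerD; rewrite le_max; apply/orP; [left | right]; lra.
Qed.

Lemma h_iid_half_ge n eps : p = 2^-1 -> (0 < n)%N -> 2^-1 <= eps <= 1 - al ->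
  (eps - al) / (1 - 2 * al) <= h_iid p al n eps.
Proof.
move=> p_half n0 /andP[e0 e1]; case/andP: al_bounds => al0 al_lt.
have al2 : 0 < 1 - 2 * al by lra.
(* [t] is chosen so that [PcX1 p al (zchannel t) = eps]. *)
set t := 2 * (1 - al - eps) / (1 - 2 * al).
have t01 : 0 <= t <= 1 by rewrite divr_ge0 ?ler_pdivrMr ?mul1r //=; lra.
have -> : (eps - al) / (1 - 2 * al) = 1 - t / 2 by rewrite /t; field; rewrite gt_eqF.
rewrite h_iidE //; apply: le_trans (PcY1_zchannel p_half t01) _.
apply: ub_le_sup; first by exists 1; exact: iid_set_ub.
exists (zchannel t) => //; split; first exact: zchannel_bin.
have -> : eps = 1 - al - t * (1 - 2 * al) / 2 by rewrite /t; field; rewrite gt_eqF.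
exact: PcX1_zchannel.
Qed.

Lemma h_low_half_le n eL eps : p = 2^-1 -> (0 < n)%N -> is_epsL p al n eL ->
  eL <= eps <= 1 - al -> h_low p al n eps <= eps / (1 - al).
Proof.
move=> p_half n0 [/andP[pL _] hE] /andP[Le e2]; have pe := le_trans pL Le.
case/andP: al_bounds => al0 al_lt; have al' := al'_gt0.
have e0 : 0 <= eps by have := p_ge_half; lra.
rewrite -(ler_pXn2r n0) ?nnegrE ?h_low_ge0 ?divr_ge0 ?(ltW al') //.
set S := (1 - al) ^+ n; set E := eps ^+ n; set Y := al ^+ n.
have S0 : 0 < S by rewrite exprn_gt0.
have YS : Y < S by rewrite ltrXn2r -?lt0n //; lra.
have ES : E <= S by rewrite lerXn2r // nnegrE; lra.
have Y0 : 0 <= Y by rewrite exprn_ge0.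
have zE : zeta p al n eps * qq p al ^+ n = (S - E) / (S - Y).
  have -> : qq p al = 2^-1 by rewrite /qq p_half; field.
  rewrite /zeta p_half (_ : 1 - 2^-1 = 2^-1 :> R); last by field.
  rewrite !exprMn -/S -/E -/Y -mulrBl; field.
  by rewrite gt_eqF ?subr_gt0 //= expf_neq0.
rewrite expr_div_n -/S -/E (_ : h_low p al n eps ^+ n = 1 - (S - E) / (S - Y)).
  rewrite -subr_ge0 (_ : _ - _ = Y * (S - E) / (S * (S - Y))).
    by rewrite !mulr_ge0 ?invr_ge0 ?mulr_ge0 ?subr_ge0 // ltW.
  by field; rewrite !gt_eqF ?subr_gt0.
by rewrite -zE; apply: hE; rewrite Le e2.
Qed.

End Regime.
End Bounds.

Theorem corollary3 (R : realType) (p al : R) :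
  2^-1 <= p < 1 -> 0 <= al < 2^-1 -> p < 1 - al ->
  (* case p > 1/2, alpha > 0 *)
  ((2^-1 < p -> 0 < al ->
    forall eL : nat -> R, (forall n : nat, (1 <= n)%N -> is_epsL p al n (eL n)) ->
    exists N : nat, forall n : nat, (N <= n)%N -> (1 <= n)%N ->
      forall eps : R, eL n <= eps <= 1 - al ->
        h_low p al n eps - h_iid p al n eps >=
          (1 - al - eps) * (Phi p al 1 - Phi p al n))
  /\
  (* case p = 1/2 *)
  (p = 2^-1 ->
    forall n : nat, (1 <= n)%N -> forall eL : R, is_epsL p al n eL ->
      forall eps : R, eL <= eps <= 1 - al ->
        h_iid p al n eps <= h_low p al n eps /\
        h_low p al n eps <= h_iid p al n eps + al / (2 * (1 - al)))).
Proof.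
(* [p < 1 - al] only makes the range of [eps] nonempty; the bounds do not need it. *)
move=> hp ha _; have p01 : 0 <= p <= 1 by case/andP: hp => ? ?; apply/andP; split; lra.
have al01 : 0 <= al <= 1 by case/andP: ha => ? ?; apply/andP; split; lra.
have p_ge_half : 2^-1 <= p by case/andP: hp.
split=> [p_gt al_gt eL heL | p_half n n0 eL heL eps e_bounds].
  have [N _ hN] := Phi_eventually_le1 hp ha p_gt al_gt.
  exists N => n Nn n0 eps e_bounds; have [/andP[pL _] _] := heL n n0.
  have := h_low_ge_Phi hp ha n0 (heL n n0) e_bounds (hN n Nn).
  have := h_iid_le_Phi1 hp ha n0 (le_trans pL (proj1 (andP e_bounds))).
  lra.
have [/andP[pL _] _] := heL; case/andP: (e_bounds) => Le e2; have pe := le_trans pL Le.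
have e_half : 2^-1 <= eps by rewrite -p_half.
split; first exact: h_iid_le_h_low.
have := h_low_half_le hp ha p_half n0 heL e_bounds.
have := h_iid_half_ge hp ha p_half n0 (introT andP (conj e_half e2)).
have := zchannel_gap ha e_half.
lra.
Qed.
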